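(* Let $b>0$, let $h:[0,b]\to[0,\infty)$ be a concave function that is not identically zero, let $\alpha,\beta>0$, and let $\mathrm{g}_\alpha(h)=\frac{\int_0^b t h(t)^\alpha dt}{\int_0^b h(t)^\alpha dt}$. Then there exist $\gamma<\delta$ and $c>0$ such that the function $g(t)=c(\delta-t)$ on $[\gamma,\delta]$ satisfies: (i) $g(\mathrm{g}_\alpha(h))=h(\mathrm{g}_\alpha(h))$; (ii) $\int_\gamma^\delta g(t)^\beta dt=\int_0^b h(t)^\beta dt$; (iii) $\int_{\mathrm{g}_\alpha(h)}^\delta g(t)^\beta dt=\int_{\mathrm{g}_\alpha(h)}^b h(t)^\beta dt$. Moreover, $0\leq\gamma\leq\mathrm{g}_\alpha(h)\leq b\leq\delta$, and, extending $h$ by $0$ on $(b,\delta]$ and $g$ by $0$ on $[0,\gamma)$, one has $\int_s^\delta h(t)^\beta dt\leq\int_s^\delta g(t)^\beta dt$ for every $s\in[0,\delta]$. *)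

From Stdlib Require Import Reals.
From Coquelicot Require Import Coquelicot.
Open Scope R_scope.

(* Real power with the convention 0^a = 0 (for a > 0): x^a for x > 0, 0 otherwise.
   Only applied to nonnegative arguments. *)
Definition rpow (x a : R) : R := if Rlt_dec 0 x then Rpower x a else 0.

Definition concave_on (a b : R) (h : R -> R) : Prop :=
  forall x y l, a <= x <= b -> a <= y <= b -> 0 <= l <= 1 ->
    l * h x + (1 - l) * h y <= h (l * x + (1 - l) * y).

Definition galpha (alpha b : R) (h : R -> R) : R :=
  RInt (fun t => t * rpow (h t) alpha) 0 b / RInt (fun t => rpow (h t) alpha) 0 b.

Definition hext (b : R) (h : R -> R) (t : R) : R :=
  if Rle_dec t b then h t else 0.

Definition gext (gamma delta c : R) (t : R) : R :=
  if Rlt_dec t gamma then 0 else c * (delta - t).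

(* The centroid m = galpha alpha b h lies in (0, b), and h m > 0 because h is concave,
   nonnegative and not identically zero.  Let g t = c (delta - t) be the line through
   (m, h m) whose beta-mass on [m, delta] equals that of h on [m, b]; comparing h with
   the chord from (m, h m) to (b, 0) gives delta >= b.  Since h - g is concave and
   vanishes at m, h <= g on [0, m] (otherwise h < g on all of (m, b], and the masses on
   [m, b] could not agree), and on [m, b] the set where h >= g is an interval starting at
   m; comparing tail masses on these pieces gives the dominance.  Finally gamma is fixed
   by the total mass, and the explicit, decreasing primitive of g^beta turns the
   inequalities mass(h, [m, b]) <= mass(h, [0, b]) <= mass(g, [0, delta]) into
   0 <= gamma <= m. *)

From Stdlib Require Import Reals Lra.
From Coquelicot Require Import Coquelicot.
Open Scope R_scope.

(** * Real powers *)

Lemma locally_Rabs x d (P : R -> Prop) :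
  0 < d -> (forall y, Rabs (y - x) < d -> P y) -> locally x P.
Proof. intros Hd HP. exists (mkposreal d Hd). intros y Hy. now apply HP. Qed.

Lemma rpow_pos x a : 0 < x -> rpow x a = Rpower x a.
Proof. intros Hx. unfold rpow. destruct (Rlt_dec 0 x); [reflexivity | lra]. Qed.

Lemma rpow_npos x a : x <= 0 -> rpow x a = 0.
Proof. intros Hx. unfold rpow. destruct (Rlt_dec 0 x); [lra | reflexivity]. Qed.

Lemma rpow_gt0 x a : 0 < x -> 0 < rpow x a.
Proof. intros Hx. rewrite rpow_pos by exact Hx. apply exp_pos. Qed.

Lemma rpow_ge0 x a : 0 <= rpow x a.
Proof.
destruct (Rlt_dec 0 x) as [Hx | Hx].
- now left; apply rpow_gt0.
- rewrite rpow_npos by lra. lra.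
Qed.

Lemma rpow_lt x y a : 0 < a -> 0 <= x < y -> rpow x a < rpow y a.
Proof.
intros Ha [[Hx | <-] Hxy].
- rewrite !rpow_pos by lra. apply Rlt_Rpower_l; lra.
- rewrite rpow_npos by lra. apply rpow_gt0; lra.
Qed.

Lemma rpow_le x y a : 0 < a -> 0 <= x <= y -> rpow x a <= rpow y a.
Proof.
intros Ha [Hx [Hxy | <-]]; [left; apply rpow_lt | right]; auto.
Qed.

Lemma rpow_plus1 x a : 0 <= x -> rpow x (a + 1) = x * rpow x a.
Proof.
intros [Hx | <-].
- rewrite !rpow_pos, Rpower_plus, Rpower_1 by lra. ring.
- rewrite !rpow_npos by lra. ring.
Qed.

Lemma rpow_Rpower_inv x a : 0 < x -> 0 < a -> rpow (Rpower x (/ a)) a = x.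
Proof.
intros Hx Ha. rewrite rpow_pos by apply exp_pos.
rewrite Rpower_mult, Rinv_l, Rpower_1 by lra. reflexivity.
Qed.

Lemma Rpower_lt_root eps a t : 0 < a -> 0 < eps -> 0 < t < Rpower eps (/ a) -> Rpower t a < eps.
Proof.
intros Ha He Ht.
rewrite <- (rpow_Rpower_inv eps a), rpow_pos by (auto; apply exp_pos).
apply Rlt_Rpower_l; lra.
Qed.

Lemma rpow_locally_Rpower x a : 0 < x -> locally x (fun t => Rpower t a = rpow t a).
Proof.
intros Hx. apply locally_Rabs with x; [exact Hx |].
intros t Ht. apply Rabs_def2 in Ht. symmetry. apply rpow_pos. lra.
Qed.

Lemma rpow_locally_zero x a : x < 0 -> locally x (fun t => 0 = rpow t a).
Proof.
intros Hx. apply locally_Rabs with (- x); [lra |].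
intros t Ht. apply Rabs_def2 in Ht. symmetry. apply rpow_npos. lra.
Qed.

(* At [0], where [rpow] vanishes on the left, both statements below come down to
   [Rpower_lt_root]. *)
Lemma continuous_rpow a x : 0 < a -> continuous (fun t => rpow t a) x.
Proof.
intros Ha. destruct (Rtotal_order x 0) as [Hx | [-> | Hx]].
- apply continuous_ext_loc with (fun _ => 0).
  + apply rpow_locally_zero; exact Hx.
  + apply continuous_const.
- apply continuity_pt_filterlim, continuity_pt_locally. intros eps.
  apply locally_Rabs with (Rpower eps (/ a)); [apply exp_pos |].
  intros t Ht. rewrite Rminus_0_r in Ht. rewrite (rpow_npos 0), Rminus_0_r by lra.
  destruct (Rlt_dec 0 t) as [Ht0 | Ht0].
  + rewrite rpow_pos by exact Ht0. rewrite Rabs_pos_eq by (left; apply exp_pos).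
    rewrite Rabs_pos_eq in Ht by lra.
    apply Rpower_lt_root; auto using cond_pos.
  + rewrite rpow_npos, Rabs_R0 by lra. apply cond_pos.
- apply continuous_ext_loc with (fun t => Rpower t a).
  + apply rpow_locally_Rpower; exact Hx.
  + apply continuity_pt_filterlim, derivable_continuous_pt.
    exists (a * Rpower x (a - 1)). apply derivable_pt_lim_power; exact Hx.
Qed.

Lemma is_derive_rpow k x : 1 < k -> is_derive (fun t => rpow t k) x (k * rpow x (k - 1)).
Proof.
intros Hk. destruct (Rtotal_order x 0) as [Hx | [-> | Hx]].
- rewrite rpow_npos, Rmult_0_r by lra.
  apply is_derive_ext_loc with (fun _ => 0).
  + apply rpow_locally_zero; exact Hx.
  + apply is_derive_Reals, derivable_pt_lim_const.
- rewrite rpow_npos, Rmult_0_r by lra.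
  apply is_derive_Reals. intros eps He.
  exists (mkposreal (Rpower eps (/ (k - 1))) (exp_pos _)). intros t Ht0 Ht. simpl in Ht.
  rewrite Rplus_0_l, (rpow_npos 0) by lra.
  destruct (Rlt_dec 0 t) as [Htp | Htn].
  + rewrite Rabs_pos_eq in Ht by lra.
    rewrite rpow_pos by exact Htp.
    replace ((Rpower t k - 0) / t - 0) with (Rpower t (k - 1)).
    2: { assert (Ek : Rpower t k = Rpower t (k - 1) * t).
         { rewrite <- (Rpower_1 t) at 3 by exact Htp. rewrite <- Rpower_plus. f_equal; ring. }
         rewrite Ek. field. lra. }
    rewrite Rabs_pos_eq by (left; apply exp_pos).
    apply Rpower_lt_root; auto; lra.
  + rewrite rpow_npos by lra. replace ((0 - 0) / t - 0) with 0 by (field; exact Ht0).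
    rewrite Rabs_R0. exact He.
- rewrite rpow_pos by exact Hx.
  apply is_derive_ext_loc with (fun t => Rpower t k).
  + apply rpow_locally_Rpower; exact Hx.
  + apply is_derive_Reals, derivable_pt_lim_power; exact Hx.
Qed.

(** * Integrals *)

Lemma is_derive_linear c D x : is_derive (fun t => c * (D - t)) x (- c).
Proof. auto_derive; [exact I | ring]. Qed.

Lemma continuous_rpow_linear c D beta x :
  0 < beta -> continuous (fun t => rpow (c * (D - t)) beta) x.
Proof.
intros Hbeta. apply (continuous_comp (fun t => c * (D - t)) (fun y => rpow y beta)).
- exact (ex_derive_continuous _ _ (ex_intro _ _ (is_derive_linear c D x))).
- apply continuous_rpow; exact Hbeta.
Qed.

Lemma is_RInt_rpow_linear c D beta u v : 0 < c -> 0 < beta ->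
  is_RInt (fun t => rpow (c * (D - t)) beta) u v
    ((rpow (c * (D - u)) (beta + 1) - rpow (c * (D - v)) (beta + 1)) / (c * (beta + 1))).
Proof.
intros Hc Hbeta.
set (P := fun t => / (- (c * (beta + 1))) * rpow (c * (D - t)) (beta + 1)).
assert (HP : forall t, is_derive P t (rpow (c * (D - t)) beta)).
{ intros t.
  assert (Hcomp := is_derive_comp (fun y => rpow y (beta + 1)) (fun t => c * (D - t)) t _ _
                     (is_derive_rpow (beta + 1) (c * (D - t)) ltac:(lra)) (is_derive_linear c D t)).
  replace (rpow (c * (D - t)) beta)
    with (scal (/ (- (c * (beta + 1)))) (scal (- c) ((beta + 1) * rpow (c * (D - t)) (beta + 1 - 1)))).
  - apply is_derive_scal. exact Hcomp.
  - replace (beta + 1 - 1) with beta by ring.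
    unfold scal; simpl; unfold mult; simpl. field. lra. }
replace ((rpow (c * (D - u)) (beta + 1) - rpow (c * (D - v)) (beta + 1)) / (c * (beta + 1)))
  with (minus (P v) (P u)).
- apply (is_RInt_derive (V := R_CompleteNormedModule)).
  + intros t _. apply HP.
  + intros t _. apply continuous_rpow_linear; exact Hbeta.
- unfold P, minus, plus, opp; simpl. field. lra.
Qed.

Lemma RInt_rpow_linear c D beta u v : 0 < c -> 0 < beta ->
  RInt (fun t => rpow (c * (D - t)) beta) u v
  = (rpow (c * (D - u)) (beta + 1) - rpow (c * (D - v)) (beta + 1)) / (c * (beta + 1)) :> R.
Proof. intros Hc Hbeta. now apply is_RInt_unique, is_RInt_rpow_linear. Qed.

Lemma ex_RInt_rpow_linear c D beta u v : 0 < c -> 0 < beta ->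
  ex_RInt (fun t => rpow (c * (D - t)) beta) u v.
Proof. intros Hc Hbeta. eexists. now apply is_RInt_rpow_linear. Qed.

Lemma RInt_Chasles_R (f : R -> R) a b c :
  ex_RInt f a b -> ex_RInt f b c -> RInt f a b + RInt f b c = RInt f a c.
Proof. intros Hab Hbc. exact (RInt_Chasles f a b c Hab Hbc). Qed.

Lemma ex_RInt_sub (f : R -> R) a b u v :
  a <= u -> u <= v -> v <= b -> ex_RInt f a b -> ex_RInt f u v.
Proof.
intros Hau Huv Hvb Hf.
apply (ex_RInt_Chasles_1 (V := R_CompleteNormedModule) f u v b); [lra |].
apply (ex_RInt_Chasles_2 (V := R_CompleteNormedModule) f a u b); [lra | exact Hf].
Qed.

Lemma is_RInt_zero_interior (f : R -> R) a d :
  (forall x, Rmin a d < x < Rmax a d -> f x = 0) -> is_RInt f a d 0.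
Proof.
intros Hf. apply (is_RInt_ext (fun _ => 0)).
- intros x Hx. symmetry. now apply Hf.
- assert (H0 := is_RInt_const (V := R_NormedModule) a d 0).
  unfold scal in H0; simpl in H0; unfold mult in H0; simpl in H0.
  rewrite Rmult_0_r in H0. exact H0.
Qed.

Lemma RInt_lt_interior (f g : R -> R) a d : a < d ->
  ex_RInt f a d -> ex_RInt g a d ->
  (forall x, a < x < d -> continuous f x) -> (forall x, a < x < d -> continuous g x) ->
  (forall x, a < x < d -> f x < g x) -> RInt f a d < RInt g a d.
Proof.
intros Had Hf Hg Hfc Hgc Hfg.
set (a' := a + (d - a) / 4). set (d' := d - (d - a) / 4).
assert (Hsub : forall F : R -> R, ex_RInt F a d ->
          RInt F a a' + RInt F a' d' + RInt F d' d = RInt F a d).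
{ intros F HF. unfold a', d'.
  rewrite !RInt_Chasles_R; auto; apply ex_RInt_sub with a d; auto; lra. }
rewrite <- (Hsub f Hf), <- (Hsub g Hg).
assert (RInt f a a' <= RInt g a a').
{ apply RInt_le; try (apply ex_RInt_sub with a d; auto); unfold a' in *; try lra.
  intros x Hx. left. apply Hfg. lra. }
assert (RInt f a' d' < RInt g a' d').
{ apply RInt_lt; unfold a', d' in *; try lra; intros x Hx.
  - apply Hgc. lra.
  - apply Hfc. lra.
  - apply Hfg. lra. }
assert (RInt f d' d <= RInt g d' d).
{ apply RInt_le; try (apply ex_RInt_sub with a d; auto); unfold d' in *; try lra.
  intros x Hx. left. apply Hfg. lra. }
lra.
Qed.

(** * Limits and continuity *)

Lemma continuous_const_minus c x : continuous (fun y => c - y) x.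
Proof.
apply (ex_derive_continuous (K := R_AbsRing) (V := R_NormedModule)).
eexists. auto_derive; [exact I | reflexivity].
Qed.

Lemma nonincreasing_lim_right (f : R -> R) a b M : a < b ->
  (forall s t, a < s -> s <= t -> t < b -> f t <= f s) -> (forall t, a < t < b -> f t <= M) ->
  exists l, filterlim f (at_right a) (locally l).
Proof.
intros Hab Hmono Hbnd.
set (E := fun x => exists t, a < t < b /\ x = f t).
destruct (completeness E) as [l [Hub Hlub]].
- exists M. intros x [t [Ht ->]]. now apply Hbnd.
- exists (f ((a + b) / 2)), ((a + b) / 2). split; [lra | reflexivity].
- exists l. apply filterlim_locally. intros eps. pose proof (cond_pos eps) as Heps.
  assert (Happrox : exists t0, a < t0 < b /\ l - eps < f t0).
  { apply Classical_Prop.NNPP. intros Hno.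
    assert (l <= l - eps) by (apply Hlub; intros x [t [Ht ->]];
      apply Rnot_lt_le; intros Hlt; apply Hno; now exists t).
    lra. }
  destruct Happrox as [t0 [Ht0 Hft0]].
  assert (Hd : 0 < t0 - a) by lra.
  exists (mkposreal _ Hd). intros t Ht Hat. change (Rabs (t - a) < t0 - a) in Ht.
  change (Rabs (f t - l) < eps). apply Rabs_def2 in Ht.
  assert (f t0 <= f t) by (apply Hmono; lra).
  assert (f t <= l) by (apply Hub; exists t; split; [lra | reflexivity]).
  apply Rabs_def1; lra.
Qed.

Lemma continuous_of_local_lipschitz (f : R -> R) x r K : 0 < r ->
  (forall t, Rabs (t - x) < r -> Rabs (f t - f x) <= K * Rabs (t - x)) -> continuous f x.
Proof.
intros Hr Hf. apply continuity_pt_filterlim, continuity_pt_locally. intros eps.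
pose proof (cond_pos eps) as Heps. pose proof (Rabs_pos K) as HK. pose proof (Rle_abs K).
apply locally_Rabs with (Rmin r (eps / (Rabs K + 1))).
{ apply Rmin_glb_lt; [exact Hr | apply Rdiv_lt_0_compat; lra]. }
intros t Ht. pose proof (Rabs_pos (t - x)).
assert (Htr : Rabs (t - x) < r) by (eapply Rlt_le_trans; [exact Ht | apply Rmin_l]).
assert (Hte : Rabs (t - x) * (Rabs K + 1) < eps).
{ apply Rlt_le_trans with (eps / (Rabs K + 1) * (Rabs K + 1)).
  - apply Rmult_lt_compat_r; [lra |]. eapply Rlt_le_trans; [exact Ht | apply Rmin_r].
  - right. field. lra. }
specialize (Hf t Htr). nra.
Qed.

(** * Concave functions *)

Section Concave.
Variables (a b : R) (h : R -> R).
Hypothesis hconc : concave_on a b h.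

Lemma concave_on_chord u v w : a <= u -> u <= v -> v <= w -> w <= b ->
  (w - v) * h u + (v - u) * h w <= (w - u) * h v.
Proof.
intros Hau Huv Hvw Hwb.
destruct (Req_dec u w) as [<- | Huw].
- replace v with u by lra. lra.
- set (l := (w - v) / (w - u)).
  assert (Hl : 0 <= l <= 1).
  { unfold l. split.
    - apply Rdiv_le_0_compat; lra.
    - apply Rmult_le_reg_r with (w - u); [lra |].
      unfold Rdiv. rewrite Rmult_assoc, Rinv_l by lra. lra. }
  assert (Hconv := hconc u w l ltac:(lra) ltac:(lra) Hl).
  replace (l * u + (1 - l) * w) with v in Hconv by (unfold l; field; lra).
  replace ((w - v) * h u + (v - u) * h w) with ((w - u) * (l * h u + (1 - l) * h w))
    by (unfold l; field; lra).
  apply Rmult_le_compat_l; lra.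
Qed.

Lemma concave_on_sub_linear c D : concave_on a b (fun t => h t - c * (D - t)).
Proof.
intros x y l Hx Hy Hl.
assert (Hconv := hconc x y l Hx Hy Hl).
replace (l * (h x - c * (D - x)) + (1 - l) * (h y - c * (D - y)))
  with (l * h x + (1 - l) * h y - c * (D - (l * x + (1 - l) * y))) by ring.
lra.
Qed.

Lemma concave_on_nonneg_between u v w : a <= u -> u <= v -> v <= w -> w <= b ->
  0 <= h u -> 0 <= h w -> 0 <= h v.
Proof.
intros Hau Huv Hvw Hwb Hu Hw.
assert (Hchord := concave_on_chord u v w Hau Huv Hvw Hwb).
destruct (Req_dec u w) as [<- | Huw].
- replace v with u by lra. exact Hu.
- nra.
Qed.

Lemma concave_on_neg_right u v w : a <= u -> u <= v -> v < w -> w <= b ->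
  h v <= 0 -> h v < h u -> h w < 0.
Proof.
intros Hau Huv Hvw Hwb Hv Hvu.
assert (Hchord := concave_on_chord u v w Hau Huv ltac:(lra) Hwb).
nra.
Qed.

Lemma concave_on_pos_interior t0 x : 0 <= h a -> 0 <= h b -> a <= t0 <= b -> 0 < h t0 ->
  a < x < b -> 0 < h x.
Proof.
intros Ha Hb Ht0 Hpos Hx.
destruct (Rle_dec t0 x).
- assert (Hchord := concave_on_chord t0 x b ltac:(lra) ltac:(lra) ltac:(lra) ltac:(lra)). nra.
- assert (Hchord := concave_on_chord a x t0 ltac:(lra) ltac:(lra) ltac:(lra) ltac:(lra)). nra.
Qed.

Lemma concave_on_pos_interior_of_nonzero : (forall t, a <= t <= b -> 0 <= h t) ->
  (exists t, a <= t <= b /\ h t <> 0) -> forall x, a < x < b -> 0 < h x.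
Proof.
intros hnonneg [t0 [Ht0 Hnz]] x Hx.
apply (concave_on_pos_interior t0); auto; try (apply hnonneg; lra).
destruct (hnonneg t0 Ht0); [assumption | congruence].
Qed.

Lemma concave_on_local_lipschitz x r t : 0 < r -> a <= x - r -> x + r <= b -> Rabs (t - x) <= r ->
  r * Rabs (h t - h x) <= Rabs (t - x) * (Rabs (h x - h (x - r)) + Rabs (h (x + r) - h x)).
Proof.
intros Hr Hxa Hxb Ht. apply Rabs_le_between in Ht.
set (A1 := h x - h (x - r)). set (A2 := h (x + r) - h x).
pose proof (Rle_abs A1). pose proof (Rle_abs A2).
pose proof (Rle_abs (- A1)). pose proof (Rle_abs (- A2)). rewrite Rabs_Ropp in *.
rewrite <- (Rabs_pos_eq r) at 1 by lra. rewrite <- Rabs_mult. apply Rabs_le.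
destruct (Rle_dec x t).
- assert (c1 := concave_on_chord (x - r) x t ltac:(lra) ltac:(lra) ltac:(lra) ltac:(lra)).
  assert (c2 := concave_on_chord x t (x + r) ltac:(lra) ltac:(lra) ltac:(lra) ltac:(lra)).
  rewrite Rabs_pos_eq by lra. unfold A1, A2 in *. split; nra.
- assert (c1 := concave_on_chord (x - r) t x ltac:(lra) ltac:(lra) ltac:(lra) ltac:(lra)).
  assert (c2 := concave_on_chord t x (x + r) ltac:(lra) ltac:(lra) ltac:(lra) ltac:(lra)).
  rewrite Rabs_left by lra. unfold A1, A2 in *. split; nra.
Qed.

Lemma concave_on_continuous x : a < x < b -> continuous h x.
Proof.
intros Hx. set (r := Rmin (x - a) (b - x) / 2).
assert (Hr : 0 < r /\ a <= x - r /\ x + r <= b).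
{ unfold r. destruct (Rle_dec (x - a) (b - x)).
  - rewrite Rmin_left by lra. lra.
  - rewrite Rmin_right by lra. lra. }
apply continuous_of_local_lipschitz with r ((Rabs (h x - h (x - r)) + Rabs (h (x + r) - h x)) / r).
{ apply Hr. }
intros t Ht.
assert (Hlip := concave_on_local_lipschitz x r t ltac:(lra) ltac:(lra) ltac:(lra) ltac:(lra)).
apply Rmult_le_reg_l with r; [lra |].
replace (r * ((Rabs (h x - h (x - r)) + Rabs (h (x + r) - h x)) / r * Rabs (t - x)))
  with (Rabs (t - x) * (Rabs (h x - h (x - r)) + Rabs (h (x + r) - h x))) by (field; lra).
exact Hlip.
Qed.

Lemma concave_on_slope_nonincreasing s t : a <= s -> s <= t -> t < b ->
  (h b - h t) / (b - t) <= (h b - h s) / (b - s).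
Proof.
intros Has Hst Htb.
assert (Hchord := concave_on_chord s t b Has Hst ltac:(lra) ltac:(lra)).
apply Rminus_le.
replace ((h b - h t) / (b - t) - (h b - h s) / (b - s))
  with (((b - t) * h s + (t - s) * h b - (b - s) * h t) / ((b - t) * (b - s))) by (field; lra).
assert (0 < / ((b - t) * (b - s))) by (apply Rinv_0_lt_compat, Rmult_lt_0_compat; lra).
unfold Rdiv. nra.
Qed.

Lemma concave_on_lim_right : a < b -> exists l, filterlim h (at_right a) (locally l).
Proof.
intros Hab. set (S := fun t => (h b - h t) / (b - t)).
destruct (nonincreasing_lim_right S a b (S a) Hab) as [l Hl].
{ intros s t Has Hst Htb. apply concave_on_slope_nonincreasing; lra. }
{ intros t Ht. apply concave_on_slope_nonincreasing; lra. }
exists (h b - l * (b - a)).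
apply filterlim_ext_loc with (fun t => h b - S t * (b - t)).
- assert (Hd : 0 < b - a) by lra.
  exists (mkposreal _ Hd). intros t Ht Hat. change (Rabs (t - a) < b - a) in Ht.
  apply Rabs_def2 in Ht. unfold S. field. lra.
- apply (filterlim_comp_2 (G := locally l) (H := locally (b - a)) S (fun t => b - t) (fun s u => h b - s * u)).
  + exact Hl.
  + apply (filterlim_filter_le_1 (F := locally a)).
    * apply filter_le_within.
    * apply continuous_const_minus.
  + apply (filterlim_comp _ _ _ (fun z => fst z * snd z) (fun y => h b - y) _
             (locally (l * (b - a)))).
    * apply (filterlim_mult (K := R_AbsRing)).
    * apply continuous_const_minus.
Qed.

End Concave.

Lemma concave_on_reflect a b h : concave_on a b h -> concave_on a b (fun t => h (a + b - t)).
Proof.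
intros hconc x y l Hx Hy Hl.
replace (a + b - (l * x + (1 - l) * y)) with (l * (a + b - x) + (1 - l) * (a + b - y)) by ring.
apply hconc; lra.
Qed.

Lemma filterlim_reflect_at_left a b : filterlim (fun t => a + b - t) (at_left b) (at_right a).
Proof.
intros P [d Hd]. exists d. intros t Ht Htb. apply Hd.
- change (Rabs (a + b - t - a) < d). change (Rabs (t - b) < d) in Ht.
  rewrite <- Rabs_Ropp. replace (- (a + b - t - a)) with (t - b) by ring. exact Ht.
- lra.
Qed.

Lemma concave_on_lim_left a b h : concave_on a b h -> a < b ->
  exists l, filterlim h (at_left b) (locally l).
Proof.
intros hconc Hab.
destruct (concave_on_lim_right a b _ (concave_on_reflect a b h hconc) Hab) as [l Hl].
exists l.
apply filterlim_ext with (fun t => h (a + b - (a + b - t))).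
- intros t. f_equal. ring.
- exact (filterlim_comp _ _ _ _ _ _ _ _ (filterlim_reflect_at_left a b) Hl).
Qed.

Lemma concave_on_continuous_extension a b h : concave_on a b h -> a < b ->
  exists g, (forall x, continuous g x) /\ (forall x, a < x < b -> g x = h x).
Proof.
intros hconc Hab.
destruct (concave_on_lim_right a b h hconc Hab) as [la Hla].
destruct (concave_on_lim_left a b h hconc Hab) as [lb Hlb].
destruct (C0_extension_lt h la lb a b Hab (concave_on_continuous a b h hconc) Hla Hlb)
  as [g [Hg [Hgh _]]].
exists g. split; assumption.
Qed.

Lemma continuous_rpow_concave a b h p x : concave_on a b h -> 0 < p -> a < x < b ->
  continuous (fun t => rpow (h t) p) x.
Proof.
intros hconc Hp Hx. apply (continuous_comp h (fun y => rpow y p)).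
- exact (concave_on_continuous a b h hconc x Hx).
- apply continuous_rpow; exact Hp.
Qed.

Lemma concave_on_ex_RInt_mul_rpow a b h (q : R -> R) p : concave_on a b h -> a < b -> 0 < p ->
  (forall x, continuous q x) -> ex_RInt (fun t => q t * rpow (h t) p) a b.
Proof.
intros hconc Hab Hp Hq.
destruct (concave_on_continuous_extension a b h hconc Hab) as [g [Hg Hgh]].
apply ex_RInt_ext with (fun t => q t * rpow (g t) p).
- intros x Hx. rewrite Rmin_left, Rmax_right in Hx by lra. now rewrite Hgh.
- apply (ex_RInt_continuous (V := R_CompleteNormedModule)). intros x _.
  apply (continuous_mult q (fun t => rpow (g t) p)); [apply Hq |].
  apply (continuous_comp g (fun y => rpow y p)); [apply Hg | apply continuous_rpow; exact Hp].
Qed.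

Lemma concave_on_ex_RInt_rpow a b h p : concave_on a b h -> a < b -> 0 < p ->
  ex_RInt (fun t => rpow (h t) p) a b.
Proof.
intros hconc Hab Hp. apply ex_RInt_ext with (fun t => 1 * rpow (h t) p).
- intros x _. apply Rmult_1_l.
- apply concave_on_ex_RInt_mul_rpow; auto. intros x. apply continuous_const.
Qed.

(** * The linear rearrangement *)

Lemma galpha_in_interval b h alpha : 0 < b ->
  (forall t, 0 <= t <= b -> 0 <= h t) -> concave_on 0 b h ->
  (exists t, 0 <= t <= b /\ h t <> 0) -> 0 < alpha ->
  0 < galpha alpha b h < b.
Proof.
intros Hb hnonneg hconc hnz Halpha.
assert (hpos := concave_on_pos_interior_of_nonzero 0 b h hconc hnonneg hnz).
set (F := fun t => rpow (h t) alpha).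
assert (HF : ex_RInt F 0 b) by (apply concave_on_ex_RInt_rpow; assumption).
assert (HtF : ex_RInt (fun t => t * F t) 0 b).
{ apply concave_on_ex_RInt_mul_rpow; auto. intros x. apply continuous_id. }
assert (HbF : ex_RInt (fun t => b * F t) 0 b).
{ apply concave_on_ex_RInt_mul_rpow; auto. intros x. apply continuous_const. }
assert (HFc : forall x, 0 < x < b -> continuous F x)
  by (intros; apply (continuous_rpow_concave 0 b); assumption).
assert (HtFc : forall x, 0 < x < b -> continuous (fun t => t * F t) x)
  by (intros; apply (continuous_mult (fun t => t) F); [apply continuous_id | auto]).
assert (H0 : RInt (fun _ => 0) 0 b = 0)
  by (apply is_RInt_unique, is_RInt_zero_interior; reflexivity).
assert (HD : RInt (fun _ => 0) 0 b < RInt F 0 b).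
{ apply RInt_lt_interior; auto.
  - apply ex_RInt_const.
  - intros; apply continuous_const.
  - intros x Hx. apply rpow_gt0, hpos, Hx. }
assert (HN : RInt (fun _ => 0) 0 b < RInt (fun t => t * F t) 0 b).
{ apply RInt_lt_interior; auto.
  - apply ex_RInt_const.
  - intros; apply continuous_const.
  - intros x Hx. apply Rmult_lt_0_compat; [lra | apply rpow_gt0, hpos, Hx]. }
assert (HNb : RInt (fun t => t * F t) 0 b < b * RInt F 0 b).
{ replace (b * RInt F 0 b) with (RInt (fun t => b * F t) 0 b)
    by exact (RInt_scal (V := R_CompleteNormedModule) F 0 b b HF).
  apply RInt_lt_interior; auto.
  - intros x Hx. apply (continuous_mult (fun _ => b) F); [apply continuous_const | auto].
  - intros x Hx. apply Rmult_lt_compat_r; [apply rpow_gt0, hpos, Hx | lra]. }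
rewrite H0 in HD, HN. unfold galpha. fold F. split.
- apply Rdiv_lt_0_compat; assumption.
- apply Rlt_div_l; [lra | exact HNb].
Qed.

Lemma RInt_rpow_hext b h p s d : s <= b -> b <= d -> ex_RInt (fun t => rpow (h t) p) s b ->
  RInt (fun t => rpow (hext b h t) p) s d = RInt (fun t => rpow (h t) p) s b.
Proof.
intros Hsb Hbd Hex.
assert (Heq : forall t, Rmin s b < t < Rmax s b -> rpow (h t) p = rpow (hext b h t) p).
{ intros t Ht. rewrite Rmin_left, Rmax_right in Ht by lra.
  unfold hext. destruct (Rle_dec t b); [reflexivity | lra]. }
assert (Hzero : is_RInt (fun t => rpow (hext b h t) p) b d 0).
{ apply is_RInt_zero_interior. intros t Ht. rewrite Rmin_left, Rmax_right in Ht by lra.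
  unfold hext. destruct (Rle_dec t b); [lra |]. apply rpow_npos; lra. }
rewrite <- (RInt_Chasles_R _ s b d).
- rewrite (is_RInt_unique _ _ _ _ Hzero), Rplus_0_r. symmetry. now apply RInt_ext.
- now apply ex_RInt_ext with (fun t => rpow (h t) p).
- eexists; exact Hzero.
Qed.

Lemma RInt_rpow_hext_right b h p s d : b <= s -> s <= d ->
  RInt (fun t => rpow (hext b h t) p) s d = 0.
Proof.
intros Hbs Hsd. apply is_RInt_unique, is_RInt_zero_interior.
intros t Ht. rewrite Rmin_left, Rmax_right in Ht by lra.
unfold hext. destruct (Rle_dec t b); [lra |]. apply rpow_npos; lra.
Qed.

Lemma RInt_rpow_gext gamma delta c p s : gamma <= s <= delta ->
  RInt (fun t => rpow (gext gamma delta c t) p) s delta = RInt (fun t => rpow (c * (delta - t)) p) s delta.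
Proof.
intros Hs. apply RInt_ext. intros t Ht. rewrite Rmin_left, Rmax_right in Ht by lra.
unfold gext. destruct (Rlt_dec t gamma); [lra | reflexivity].
Qed.

Lemma RInt_rpow_gext_left gamma delta c p s : s <= gamma -> gamma <= delta ->
  ex_RInt (fun t => rpow (c * (delta - t)) p) gamma delta ->
  RInt (fun t => rpow (gext gamma delta c t) p) s delta
  = RInt (fun t => rpow (c * (delta - t)) p) gamma delta.
Proof.
intros Hsg Hgd Hex.
assert (Hzero : is_RInt (fun t => rpow (gext gamma delta c t) p) s gamma 0).
{ apply is_RInt_zero_interior. intros t Ht. rewrite Rmin_left, Rmax_right in Ht by lra.
  unfold gext. destruct (Rlt_dec t gamma); [| lra]. apply rpow_npos; lra. }
rewrite <- (RInt_Chasles_R _ s gamma delta).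
- rewrite (is_RInt_unique _ _ _ _ Hzero), Rplus_0_l. apply RInt_rpow_gext; lra.
- eexists; exact Hzero.
- apply ex_RInt_ext with (fun t => rpow (c * (delta - t)) p); [| exact Hex].
  intros t Ht. rewrite Rmin_left, Rmax_right in Ht by lra.
  unfold gext. destruct (Rlt_dec t gamma); [lra | reflexivity].
Qed.

Section LinearRearrangement.

Variables (b : R) (h : R -> R) (beta m : R).
Hypothesis hnonneg : forall t, 0 <= t <= b -> 0 <= h t.
Hypothesis hconc : concave_on 0 b h.
Hypothesis hbeta : 0 < beta.
Hypothesis hm : 0 < m < b.
Hypothesis hm_pos : 0 < h m.

(* [P] is the primitive of [G] vanishing at [delta]; [delta] and [gamma] are chosen so
   that [P m = T] and [P gamma = A], i.e. (iii) and (ii). *)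
Let F t := rpow (h t) beta.
Let k := beta + 1.
Let T : R := RInt F m b.
Let A : R := RInt F 0 b.
Let delta := m + k * T / rpow (h m) beta.
Let c := h m / (delta - m).
Let G t := rpow (c * (delta - t)) beta.
Let P u := rpow (c * (delta - u)) k / (c * k).
Let gamma := delta - Rpower (c * k * A) (/ k) / c.

Lemma ex_RInt_F u v : 0 <= u -> u <= v -> v <= b -> ex_RInt F u v.
Proof.
intros Hu Huv Hv. apply ex_RInt_sub with 0 b; auto.
apply concave_on_ex_RInt_rpow; [exact hconc | lra | exact hbeta].
Qed.

Lemma RInt_F_ge0 u v : u <= v -> ex_RInt F u v -> 0 <= RInt F u v.
Proof. intros Huv Hex. apply RInt_ge_0; auto. intros. apply rpow_ge0. Qed.

(* By concavity, the line through [(m, h m)] and [(b, 0)] lies below [h] on [[m, b]]. *)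
Lemma T_lower_bound : rpow (h m) beta * (b - m) / k <= T.
Proof.
set (c' := h m / (b - m)).
assert (Hc' : 0 < c') by (apply Rdiv_lt_0_compat; lra).
assert (Hline : rpow (h m) beta * (b - m) / k = RInt (fun t => rpow (c' * (b - t)) beta) m b).
{ rewrite RInt_rpow_linear by assumption.
  replace (c' * (b - m)) with (h m) by (unfold c'; field; lra).
  rewrite Rminus_diag, Rmult_0_r, (rpow_npos 0), rpow_plus1 by lra.
  unfold c', k. field. lra. }
rewrite Hline. apply RInt_le; [lra | apply ex_RInt_rpow_linear; auto | apply ex_RInt_F; lra |].
intros t Ht. apply rpow_le; [exact hbeta |]. split; [apply Rmult_le_pos; lra |].
assert (Hphi := concave_on_nonneg_between 0 b _ (concave_on_sub_linear 0 b h hconc c' b) m t b).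
simpl in Hphi. rewrite Rminus_diag, Rmult_0_r in Hphi.
enough (0 <= h t - c' * (b - t)) by lra. apply Hphi; try lra.
- unfold c'. right. field. lra.
- rewrite Rminus_0_r. apply hnonneg. lra.
Qed.

Lemma T_pos : 0 < T.
Proof.
eapply Rlt_le_trans; [| exact T_lower_bound].
apply Rdiv_lt_0_compat; [apply Rmult_lt_0_compat; [apply rpow_gt0 |] |]; unfold k; lra.
Qed.

Lemma b_le_delta : b <= delta.
Proof.
assert (HT := T_lower_bound). assert (Hry : 0 < rpow (h m) beta) by (apply rpow_gt0; lra).
unfold delta. enough (b - m <= k * T / rpow (h m) beta) by lra.
apply Rle_div_r; [lra |]. apply Rle_div_l in HT; [lra | unfold k; lra].
Qed.

Lemma c_pos : 0 < c.
Proof. pose proof b_le_delta. apply Rdiv_lt_0_compat; lra. Qed.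

Lemma c_mul_delta_m : c * (delta - m) = h m.
Proof. pose proof b_le_delta. unfold c. field. lra. Qed.

Lemma ex_RInt_G u v : ex_RInt G u v.
Proof. apply ex_RInt_rpow_linear; [exact c_pos | exact hbeta]. Qed.

Lemma RInt_G u v : RInt G u v = P u - P v :> R.
Proof.
unfold G. rewrite RInt_rpow_linear by (apply c_pos || exact hbeta).
unfold P, k. field. split; [lra | apply Rgt_not_eq, c_pos].
Qed.

Lemma P_nonneg u : 0 <= P u.
Proof.
apply Rdiv_le_0_compat; [apply rpow_ge0 |].
apply Rmult_lt_0_compat; [apply c_pos | unfold k; lra].
Qed.

Lemma P_delta : P delta = 0.
Proof. unfold P. rewrite Rminus_diag, Rmult_0_r, rpow_npos by lra. unfold Rdiv. ring. Qed.

Lemma P_m : P m = T.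
Proof.
pose proof T_pos. assert (Hry : 0 < rpow (h m) beta) by (apply rpow_gt0; lra).
unfold P. rewrite c_mul_delta_m. unfold k. rewrite rpow_plus1 by lra.
unfold c, delta, k. field. repeat split; nra.
Qed.

Lemma P_decreasing u v : u < v -> v <= delta -> P v < P u.
Proof.
intros Huv Hv. pose proof c_pos.
apply Rmult_lt_compat_r; [apply Rinv_0_lt_compat, Rmult_lt_0_compat; unfold k; lra |].
apply rpow_lt; [unfold k; lra |]. split; [apply Rmult_le_pos |]; nra.
Qed.

Lemma A_split : RInt F 0 m + T = A.
Proof. apply RInt_Chasles_R; apply ex_RInt_F; lra. Qed.

Lemma T_le_A : T <= A.
Proof.
rewrite <- A_split. assert (0 <= RInt F 0 m) by (apply RInt_F_ge0; [lra | apply ex_RInt_F; lra]).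
lra.
Qed.

Lemma gamma_lt_delta : gamma < delta.
Proof.
pose proof c_pos. pose proof T_pos. pose proof T_le_A.
unfold gamma. enough (0 < Rpower (c * k * A) (/ k) / c) by lra.
apply Rdiv_lt_0_compat; [apply exp_pos | lra].
Qed.

Lemma P_gamma : P gamma = A.
Proof.
pose proof c_pos. pose proof T_pos. pose proof T_le_A.
unfold P. replace (c * (delta - gamma)) with (Rpower (c * k * A) (/ k)) by (unfold gamma; field; lra).
rewrite rpow_Rpower_inv; [field; unfold k; lra | | unfold k; lra].
apply Rmult_lt_0_compat; [apply Rmult_lt_0_compat |]; unfold k; lra.
Qed.

Lemma RInt_F_le_G u v : 0 <= u -> u <= v -> v <= b ->
  (forall t, u < t < v -> h t <= c * (delta - t)) -> RInt F u v <= RInt G u v.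
Proof.
intros Hu Huv Hv Hle. apply RInt_le; auto using ex_RInt_F, ex_RInt_G.
intros t Ht. apply rpow_le; [exact hbeta |]. split; [apply hnonneg; lra | auto].
Qed.

Lemma RInt_G_le_F u v : 0 <= u -> u <= v -> v <= b ->
  (forall t, u < t < v -> c * (delta - t) <= h t) -> RInt G u v <= RInt F u v.
Proof.
intros Hu Huv Hv Hle. pose proof c_pos. pose proof b_le_delta.
apply RInt_le; auto using ex_RInt_F, ex_RInt_G.
intros t Ht. apply rpow_le; [exact hbeta |]. split; [apply Rmult_le_pos; lra | auto].
Qed.

Lemma phi_concave : concave_on 0 b (fun t => h t - c * (delta - t)).
Proof. apply concave_on_sub_linear, hconc. Qed.

(* If [h] exceeded the line somewhere left of [m], concavity would put it strictly
   below the line on [(m, b)], contradicting [RInt G m delta = T]. *)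
Lemma h_le_line_left t : 0 <= t <= m -> h t <= c * (delta - t).
Proof.
intros Ht. apply Rnot_lt_le. intros Hgt.
assert (Htm : t < m).
{ destruct (Req_dec t m) as [-> |]; [rewrite c_mul_delta_m in Hgt; lra | lra]. }
assert (Hbelow : forall x, m < x < b -> h x < c * (delta - x)).
{ intros x Hx.
  assert (Hphi := concave_on_neg_right 0 b _ phi_concave t m x ltac:(lra) ltac:(lra) ltac:(lra) ltac:(lra)).
  simpl in Hphi. rewrite c_mul_delta_m in Hphi. enough (h x - c * (delta - x) < 0) by lra.
  apply Hphi; lra. }
assert (Hlt : RInt F m b < RInt G m b).
{ apply RInt_lt_interior; [lra | apply ex_RInt_F; lra | apply ex_RInt_G | | |].
  - intros x Hx. apply (continuous_rpow_concave 0 b); [exact hconc | exact hbeta | lra].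
  - intros x _. apply continuous_rpow_linear. exact hbeta.
  - intros x Hx. apply rpow_lt; [exact hbeta |]. split; [apply hnonneg; lra | auto]. }
rewrite RInt_G in Hlt. pose proof P_m. pose proof (P_nonneg b). fold T in Hlt. lra.
Qed.

Lemma RInt_F_le_P s : 0 <= s <= b -> RInt F s b <= P s.
Proof.
intros Hs. pose proof b_le_delta. pose proof c_pos.
destruct (Rle_dec s m) as [Hsm | Hms].
- assert (Hsplit : RInt F s m + T = RInt F s b) by (apply RInt_Chasles_R; apply ex_RInt_F; lra).
  assert (Hcmp : RInt F s m <= RInt G s m)
    by (apply RInt_F_le_G; try lra; intros t Ht; apply h_le_line_left; lra).
  rewrite RInt_G, P_m in Hcmp. lra.
- destruct (Rle_dec (c * (delta - s)) (h s)) as [Habove | Hbelow].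
  + assert (Hsplit : RInt F m s + RInt F s b = T) by (apply RInt_Chasles_R; apply ex_RInt_F; lra).
    assert (Hcmp : RInt G m s <= RInt F m s).
    { apply RInt_G_le_F; try lra. intros t Ht.
      assert (Hphi := concave_on_nonneg_between 0 b _ phi_concave m t s ltac:(lra) ltac:(lra) ltac:(lra) ltac:(lra)).
      simpl in Hphi. rewrite c_mul_delta_m in Hphi.
      enough (0 <= h t - c * (delta - t)) by lra. apply Hphi; lra. }
    rewrite RInt_G, P_m in Hcmp. lra.
  + assert (Hcmp : RInt F s b <= RInt G s b).
    { apply RInt_F_le_G; try lra. intros t Ht.
      assert (Hphi := concave_on_neg_right 0 b _ phi_concave m s t ltac:(lra) ltac:(lra) ltac:(lra) ltac:(lra)).
      simpl in Hphi. rewrite c_mul_delta_m in Hphi.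
      enough (h t - c * (delta - t) < 0) by lra. apply Hphi; lra. }
    rewrite RInt_G in Hcmp. pose proof (P_nonneg b). lra.
Qed.

Lemma gamma_le_m : gamma <= m.
Proof.
apply Rnot_lt_le. intros Hmg.
assert (Hdec := P_decreasing m gamma Hmg (Rlt_le _ _ gamma_lt_delta)).
rewrite P_gamma, P_m in Hdec. pose proof T_le_A. lra.
Qed.

Lemma gamma_nonneg : 0 <= gamma.
Proof.
apply Rnot_lt_le. intros Hg0. pose proof b_le_delta as Hbd.
assert (Hdec := P_decreasing gamma 0 Hg0 ltac:(lra)).
assert (HA := RInt_F_le_P 0 ltac:(lra)). rewrite P_gamma in Hdec. fold A in HA. lra.
Qed.

Lemma RInt_hext_le_gext s : 0 <= s <= delta ->
  RInt (fun t => rpow (hext b h t) beta) s delta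
  <= RInt (fun t => rpow (gext gamma delta c t) beta) s delta.
Proof.
intros Hs. pose proof b_le_delta. pose proof gamma_le_m. pose proof gamma_nonneg.
destruct (Rle_dec s b) as [Hsb | Hbs].
- rewrite RInt_rpow_hext by (try apply ex_RInt_F; lra). fold F.
  destruct (Rle_dec gamma s) as [Hgs | Hsg].
  + rewrite RInt_rpow_gext by lra. fold G. rewrite RInt_G, P_delta, Rminus_0_r.
    apply RInt_F_le_P. lra.
  + rewrite RInt_rpow_gext_left by (try apply ex_RInt_G; lra). fold G.
    rewrite RInt_G, P_delta, Rminus_0_r, P_gamma.
    assert (Hsplit : RInt F 0 s + RInt F s b = A) by (apply RInt_Chasles_R; apply ex_RInt_F; lra).
    assert (0 <= RInt F 0 s) by (apply RInt_F_ge0; [lra | apply ex_RInt_F; lra]). lra.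
- rewrite RInt_rpow_hext_right, RInt_rpow_gext by lra. fold G.
  rewrite RInt_G, P_delta, Rminus_0_r. apply P_nonneg.
Qed.

Lemma linear_rearrangement : exists gamma delta c : R,
    gamma < delta /\ 0 < c /\
    c * (delta - m) = h m /\
    RInt (fun t => rpow (c * (delta - t)) beta) gamma delta = RInt (fun t => rpow (h t) beta) 0 b /\
    RInt (fun t => rpow (c * (delta - t)) beta) m delta = RInt (fun t => rpow (h t) beta) m b /\
    0 <= gamma /\ gamma <= m /\ m <= b /\ b <= delta /\
    (forall s, 0 <= s <= delta ->
       RInt (fun t => rpow (hext b h t) beta) s delta
       <= RInt (fun t => rpow (gext gamma delta c t) beta) s delta).
Proof.
exists gamma, delta, c. fold G F.
rewrite !RInt_G, P_delta, P_gamma, P_m, !Rminus_0_r.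
repeat split; auto using gamma_lt_delta, c_pos, c_mul_delta_m, gamma_nonneg, gamma_le_m,
  b_le_delta, RInt_hext_le_gext; lra.
Qed.

End LinearRearrangement.

Theorem mainTheorem6 (b : R) (h : R -> R) (alpha beta : R)
  (hb : 0 < b)
  (hnonneg : forall t, 0 <= t <= b -> 0 <= h t)
  (hconc : concave_on 0 b h)
  (hnz : exists t, 0 <= t <= b /\ h t <> 0)
  (halpha : 0 < alpha) (hbeta : 0 < beta) :
  let m := galpha alpha b h in
  exists gamma delta c : R,
    gamma < delta /\ 0 < c /\
    (* (i) *) c * (delta - m) = h m /\
    (* (ii) *) RInt (fun t => rpow (c * (delta - t)) beta) gamma delta
               = RInt (fun t => rpow (h t) beta) 0 b /\
    (* (iii) *) RInt (fun t => rpow (c * (delta - t)) beta) m delta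
               = RInt (fun t => rpow (h t) beta) m b /\
    0 <= gamma /\ gamma <= m /\ m <= b /\ b <= delta /\
    (forall s, 0 <= s <= delta ->
       RInt (fun t => rpow (hext b h t) beta) s delta
       <= RInt (fun t => rpow (gext gamma delta c t) beta) s delta).
Proof.
intros m.
assert (Hm : 0 < m < b) by (apply galpha_in_interval; assumption).
assert (Hhm : 0 < h m) by (apply (concave_on_pos_interior_of_nonzero 0 b h); assumption).
exact (linear_rearrangement b h beta m hnonneg hconc hbeta Hm Hhm).
Qed.
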